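(* Let $H$ be an acyclic simple digraph, let $k$ be a positive integer, and let $T$ be a tournament that does not contain $k$ pairwise arc-disjoint immersion copies of $H$. Then there is a set $F$ of at most $d_{\mathrm{eh}}^2\cdot 4^{|V(H)|}\,k$ arcs of $T$ such that $T-F$ does not contain $H$ as an immersion.
   Context: A tournament is a simple digraph with exactly one arc between every pair of distinct vertices. An immersion copy of $H$ in a digraph $G$ is a subgraph $\widehat H$ of $G$ with a map sending vertices of $H$ to distinct vertices of $\widehat H$ and each arc $(u,v)$ of $H$ to a directed path from the image of $u$ to the image of $v$, such that each arc of $\widehat H$ lies on exactly one of these paths; $G$ contains $H$ as an immersion if it has such a subgraph. $T-F$ is $T$ with the arcs of $F$ removed. $d_{\mathrm{eh}}$ denotes a fixed universal constant such that for all positive integers $q,k$, a complete graph on at least $d_{\mathrm{eh}}\cdot q\sqrt{k}$ vertices contains $k$ pairwise edge-disjoint complete subgraphs on $q$ vertices each. *)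

From mathcomp Require Import all_boot.
From Stdlib Require Import Reals.

Set Implicit Arguments.
Unset Strict Implicit.
Unset Printing Implicit Defensive.

(* simple digraph: no loops (multiple arcs are impossible for a relation) *)
Definition simple_digraph (V : finType) (H : rel V) : Prop := irreflexive H.

Definition acyclic (V : finType) (H : rel V) : Prop :=
  forall (x : V) (p : seq V), path H x p -> last x p = x -> p = [::].

Definition tournament (W : finType) (A : rel W) : Prop :=
  irreflexive A /\ forall u v : W, u != v -> (A u v && ~~ A v u) || (A v u && ~~ A u v).

Definition arcset (W : finType) (A : rel W) : {set W * W} :=
  [set e | A e.1 e.2].

Definition walk_arcs (W : finType) (x : W) (p : seq W) : {set W * W} :=
  [set e | e \in zip (x :: p) p].

Definition dipath (W : finType) (E : {set W * W}) (x y : W) (p : seq W) : Prop :=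
  path (fun a b => (a, b) \in E) x p /\ last x p = y /\ uniq (x :: p).

(* An immersion copy of H in the digraph E: an injective vertex map phi and,
   for each arc (u,v) of H, a directed path P u v from phi u to phi v in E,
   such that the paths of distinct arcs are arc-disjoint (so every arc of the
   copy, i.e. of the union of the paths, lies on exactly one of them). *)
Definition immersion_copy (V W : finType) (H : rel V) (E : {set W * W})
    (phi : V -> W) (P : V -> V -> seq W) : Prop :=
  injective phi /\
  (forall u v, H u v -> dipath E (phi u) (phi v) (P u v)) /\
  (forall u v u' v', H u v -> H u' v' -> (u, v) <> (u', v') ->
     [disjoint walk_arcs (phi u) (P u v) & walk_arcs (phi u') (P u' v')]).

Definition copy_arcs (V W : finType) (H : rel V) (phi : V -> W)
    (P : V -> V -> seq W) : {set W * W} :=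
  \bigcup_(a : V * V | H a.1 a.2) walk_arcs (phi a.1) (P a.1 a.2).

Definition contains_immersion (V W : finType) (H : rel V) (E : {set W * W}) : Prop :=
  exists (phi : V -> W) (P : V -> V -> seq W), immersion_copy H E phi P.

Definition contains_k_disjoint_immersions (V W : finType) (H : rel V)
    (E : {set W * W}) (k : nat) : Prop :=
  exists (phi : 'I_k -> V -> W) (P : 'I_k -> V -> V -> seq W),
    (forall i, immersion_copy H E (phi i) (P i)) /\
    (forall i j, i != j -> [disjoint copy_arcs H (phi i) (P i) & copy_arcs H (phi j) (P j)]).

(* The defining property of d_eh: for all positive q, k, the complete graph on
   n >= d q sqrt(k) vertices contains k pairwise edge-disjoint complete subgraphs
   on q vertices (given by their vertex sets; two cliques share an edge iff they
   share two distinct vertices). *)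
Definition eh_constant (d : R) : Prop :=
  forall q k n : nat, (0 < q)%N -> (0 < k)%N ->
    (d * INR q * sqrt (INR k) <= INR n)%R ->
    exists S : 'I_k -> {set 'I_n},
      (forall i, #|S i| = q) /\
      (forall i j, i != j -> forall u v : 'I_n, u != v ->
         ~ [/\ u \in S i, v \in S i, u \in S j & v \in S j]).

(** If T has at least d_eh 2^|V(H)| sqrt k vertices, the packing property of
    d_eh yields k sets of 2^|V(H)| vertices of T, pairwise sharing at most one
    vertex.  Each spans a transitive subtournament on |V(H)| + 1 vertices
    (Erdős–Moser), into which the acyclic H embeds along a topological order,
    every arc of H going to a single arc; two of these sets share no pair of
    vertices, so the k copies are arc-disjoint.  Otherwise deleting all arcs of
    T costs at most |V(T)|^2 < d_eh^2 4^|V(H)| k, and an immersion of H into the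
    arcless digraph forces H to be arcless, when k disjoint copies are trivial. *)

From mathcomp Require Import all_boot zify.
From Stdlib Require Import Reals Lra.
(* Reals rebinds [_ ^ _] in nat_scope to [Nat.pow]; restore [expn]. *)
From mathcomp Require Import ssrnat.

Set Implicit Arguments.
Unset Strict Implicit.
Unset Printing Implicit Defensive.

Section TopologicalOrder.

Variables (V : finType) (H : rel V).
Hypothesis acyclicH : acyclic H.

Let ancestors (v : V) : {pred V} := [pred w | connect H w v].

Lemma card_ancestors_lt (u v : V) : H u v -> #|ancestors u| < #|ancestors v|.
Proof.
move=> Huv; apply/proper_card/properP; split.
  by apply/subsetP=> w; rewrite !inE => Hwu; apply: connect_trans Hwu (connect1 Huv).
exists v; rewrite !inE ?connect0 //; apply/negP=> /connectP [p Hp Hlast].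
by have := @acyclicH u (v :: p); rewrite /= Huv Hp => /(_ isT (esym Hlast)).
Qed.

Lemma acyclic_topological_index :
  exists f : V -> nat,
    [/\ injective f, forall v, f v < #|V| & forall u v, H u v -> f u < f v].
Proof.
pose le_anc u v := #|ancestors u| <= #|ancestors v|.
pose s := sort le_anc (enum V).
have s_all u : u \in s by rewrite mem_sort mem_enum.
exists (index^~ s); split.
- by move=> x y; apply: (index_inj x); rewrite ?s_all.
- by move=> v; rewrite cardE -(size_sort le_anc) index_mem s_all.
move=> u v Huv; rewrite ltnNge; apply/negP=> le_vu.
have s_sorted : sorted le_anc s by apply: sort_sorted=> x y; apply: leq_total.
have le_tr : transitive le_anc by move=> x y z; apply: leq_trans.
have := sorted_leq_index le_tr (fun x => leqnn _) s_sorted v u (s_all v) (s_all u) le_vu.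
by rewrite /le_anc leqNgt card_ancestors_lt.
Qed.

End TopologicalOrder.

Lemma tournament_transitive_subtournament (W : finType) (A : rel W) :
  tournament A -> forall (m : nat) (S : {set W}), 2 ^ m <= #|S| ->
  exists s, [/\ size s = m.+1, uniq s, {subset s <= S} & pairwise A s].
Proof.
move=> [irrA totA]; elim=> [|m IHm] S leS.
  have /card_gt0P [x Sx] : 0 < #|S| by rewrite (leq_trans _ leS).
  by exists [:: x]; split=> //= y; rewrite inE => /eqP ->.
have /card_gt0P [x Sx] : 0 < #|S| by rewrite (leq_trans _ leS) ?expn_gt0.
pose Out := [set y in S | A x y]; pose In := [set y in S | A y x].
have S_split : S \subset x |: (Out :|: In).
  apply/subsetP=> y Sy; rewrite !inE Sy /=; case: (eqVneq y x) => //= neq_yx.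
  by have := totA x y; rewrite eq_sym neq_yx => /(_ isT) /orP [/andP [->]|/andP [->]]; rewrite ?orbT.
have := subset_leq_card S_split; rewrite cardsU1 cardsU => card_S.
have [/IHm [s [sz_s uniq_s sub_s pw_s]] | /IHm [s [sz_s uniq_s sub_s pw_s]]] :
    2 ^ m <= #|Out| \/ 2 ^ m <= #|In|.
  by move: leS; rewrite expnS; case: (x \notin _) card_S => /=; lia.
- exists (x :: s); split=> /=; first by rewrite sz_s.
  + by rewrite uniq_s andbT; apply/negP=> /sub_s; rewrite inE irrA andbF.
  + by move=> y; rewrite inE => /orP [/eqP ->|/sub_s]; rewrite // inE => /andP [].
  + by rewrite pw_s andbT; apply/allP=> y /sub_s; rewrite inE => /andP [].
- exists (rcons s x); split; first by rewrite size_rcons sz_s.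
  + by rewrite rcons_uniq uniq_s andbT; apply/negP=> /sub_s; rewrite inE irrA andbF.
  + by move=> y; rewrite mem_rcons inE => /orP [/eqP ->|/sub_s]; rewrite // inE => /andP [].
  + by rewrite pairwise_rcons pw_s andbT; apply/allP=> y /sub_s; rewrite inE => /andP [].
Qed.

Section ArcEmbeddings.

Variables (V W : finType) (H : rel V) (A : rel W).

Definition arc_paths (phi : V -> W) (u v : V) : seq W := [:: phi v].

Lemma walk_arcs1 (x y : W) : walk_arcs x [:: y] = [set (x, y)].
Proof. by apply/setP=> e; rewrite !inE. Qed.

Lemma homomorphism_immersion_copy (phi : V -> W) :
  simple_digraph H -> injective phi -> {homo phi : u v / H u v >-> A u v} ->
  immersion_copy H (arcset A) phi (arc_paths phi).
Proof.
move=> irrH inj_phi hom_phi; split=> //; split=> [u v Huv | u v u' v' _ _ neq_arcs].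
  split; first by rewrite /= inE hom_phi.
  split=> //=; rewrite inE andbT (inj_eq inj_phi).
  by apply: contraTneq Huv => ->; rewrite irrH.
rewrite /arc_paths !walk_arcs1 disjoints1 in_set1 xpair_eqE !(inj_eq inj_phi).
by apply/negP=> /andP [/eqP eq_u /eqP eq_v]; apply: neq_arcs; rewrite eq_u eq_v.
Qed.

Lemma copy_arcs_arc_paths (phi : V -> W) :
  copy_arcs H phi (arc_paths phi) =
  [set (phi a.1, phi a.2) | a in [set a : V * V | H a.1 a.2]].
Proof.
apply/setP=> e; apply/bigcupP/imsetP=> [[a Ha]|[a + ->]].
  by rewrite /arc_paths walk_arcs1 inE => /eqP ->; exists a; rewrite ?inE.
by rewrite inE => Ha; exists a; rewrite // /arc_paths walk_arcs1 inE.
Qed.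

Lemma arc_paths_copies_disjoint (phi psi : V -> W) (S T : {set W}) :
  simple_digraph H -> injective phi ->
  (forall v, phi v \in S) -> (forall v, psi v \in T) -> #|S :&: T| <= 1 ->
  [disjoint copy_arcs H phi (arc_paths phi) & copy_arcs H psi (arc_paths psi)].
Proof.
move=> irrH inj_phi S_phi T_psi card_ST.
rewrite !copy_arcs_arc_paths -setI_eq0; apply/set0Pn=> [[e]].
rewrite inE => /andP [/imsetP [[u v] + ->] /imsetP [[u' v'] _ [eq_u eq_v]]].
rewrite inE /= => Huv; move: card_ST; rewrite leqNgt => /card_gt1P; apply.
exists (phi u), (phi v); rewrite !inE !S_phi (inj_eq inj_phi) eq_u eq_v !T_psi.
by split=> //; apply: contraTneq Huv => ->; rewrite irrH.
Qed.

Lemma acyclic_transitive_embedding (S : {set W}) :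
  acyclic H -> tournament A -> 2 ^ #|V| <= #|S| ->
  exists phi : V -> W,
    [/\ injective phi, forall v, phi v \in S & {homo phi : u v / H u v >-> A u v}].
Proof.
move=> acyclicH tourA card_S.
have [f [inj_f f_lt f_hom]] := acyclic_topological_index acyclicH.
have [s [sz_s uniq_s sub_s pw_s]] := tournament_transitive_subtournament tourA card_S.
have x : W by case: s sz_s {uniq_s sub_s pw_s}.
have f_in_s v : f v < size s by rewrite sz_s ltnS ltnW.
exists (fun v => nth x s (f v)); split=> [u v /eqP | v | u v Huv].
- by rewrite nth_uniq // => /eqP /inj_f.
- exact/sub_s/mem_nth.
- by apply: (pairwiseP x pw_s); rewrite ?inE ?f_in_s ?f_hom.
Qed.

End ArcEmbeddings.

Lemma eh_constant_disjoint_immersions (d : R) (V W : finType) (H : rel V) (A : rel W)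
    (k : nat) :
  eh_constant d -> simple_digraph H -> acyclic H -> tournament A -> 0 < k ->
  (d * INR (2 ^ #|V|) * sqrt (INR k) <= INR #|W|)%R ->
  contains_k_disjoint_immersions H (arcset A) k.
Proof.
move=> ehd irrH acyclicH tourA k_gt0 large_W.
have [S [card_S share_S]] := ehd _ k _ (expn_gt0 2 #|V|) k_gt0 large_W.
pose T i := enum_rank @^-1: S i.
have card_T i : #|T i| = 2 ^ #|V|.
  by rewrite on_card_preimset ?card_S //; apply/onW_bij/enum_rank_bij.
have share_T i j : i != j -> #|T i :&: T j| <= 1.
  move=> neq_ij; rewrite leqNgt; apply/card_gt1P=> [[x [y []]]].
  rewrite !inE => /andP [Six Sjx] /andP [Siy Sjy] neq_xy.
  by apply: (share_S i j neq_ij (enum_rank x) (enum_rank y)); rewrite ?(inj_eq enum_rank_inj).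
have [phi phi_spec] := fin_all_exists (fun i =>
  acyclic_transitive_embedding (S := T i) acyclicH tourA (eq_leq (esym (card_T i)))).
exists phi, (fun i => arc_paths (phi i)); split=> [i | i j neq_ij].
  by have [inj_phi _ hom_phi] := phi_spec i; apply: homomorphism_immersion_copy.
have [inj_phi Ti_phi _] := phi_spec i; have [_ Tj_phi _] := phi_spec j.
exact: arc_paths_copies_disjoint (share_T i j neq_ij).
Qed.

Lemma immersion_in_set0_disjoint_immersions (V W : finType) (H : rel V)
    (E : {set W * W}) (k : nat) :
  simple_digraph H -> contains_immersion H (set0 : {set W * W}) ->
  contains_k_disjoint_immersions H E k.
Proof.
move=> irrH [phi [P [inj_phi [path_P _]]]].
have noH u v : H u v = false.
  apply/negP=> Huv; have [+ [+ _]] := path_P u v Huv.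
  case: (P u v) => [_ /= /inj_phi eq_uv | y p] /=; last by rewrite inE.
  by move: Huv; rewrite eq_uv irrH.
have copy_arcs0 : copy_arcs H phi P = set0 by rewrite /copy_arcs big_pred0.
exists (fun _ => phi), (fun _ => P); split=> [i | i j _].
  by split=> //; split=> u v; rewrite noH.
by rewrite -setI_eq0 copy_arcs0 set0I.
Qed.

Lemma card_arcset_le (W : finType) (A : rel W) : #|arcset A| <= #|W| * #|W|.
Proof. by rewrite -card_prod max_card. Qed.

Lemma sqr_le_of_lt_mul_sqrt (n x k : R) :
  (0 <= n -> 0 <= k -> n < x * sqrt k -> n * n <= x ^ 2 * k)%R.
Proof.
move=> n_ge0 k_ge0 n_lt.
rewrite -[k in (_ <= _ * k)%R](sqrt_sqrt k k_ge0).
have -> : (x ^ 2 * (sqrt k * sqrt k) = (x * sqrt k) * (x * sqrt k))%R by ring.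
apply: Rmult_le_compat; lra.
Qed.

Lemma INR_expn (m n : nat) : INR (m ^ n) = (INR m ^ n)%R.
Proof. by elim: n => [|n IHn] //; rewrite expnS -multE mult_INR IHn. Qed.

Theorem corollary15 (d : R) (Hd : eh_constant d)
    (V W : finType) (H : rel V) (A : rel W) (k : nat) :
  simple_digraph H -> acyclic H -> tournament A -> (0 < k)%N ->
  ~ contains_k_disjoint_immersions H (arcset A) k ->
  exists F : {set W * W},
    F \subset arcset A /\
    (INR #|F| <= d ^ 2 * 4 ^ #|V| * INR k)%R /\
    ~ contains_immersion H (arcset A :\: F).
Proof.
move=> irrH acyclicH tourA k_gt0 no_k_copies.
have [large_W | small_W] := Rle_dec (d * INR (2 ^ #|V|) * sqrt (INR k)) (INR #|W|).
  by exfalso; apply: no_k_copies; apply: eh_constant_disjoint_immersions Hd _ _ _ _ large_W.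
exists (arcset A); split=> //; split; last first.
  rewrite setDv => /(immersion_in_set0_disjoint_immersions (arcset A) k irrH).
  exact: no_k_copies.
apply: Rle_trans (le_INR _ _ (leP (card_arcset_le A))) _.
have -> : (d ^ 2 * 4 ^ #|V| = (d * INR (2 ^ #|V|)) ^ 2)%R.
  rewrite INR_expn Rpow_mult_distr -pow_mult Nat.mul_comm pow_mult.
  by congr (_ * (_ ^ _))%R; rewrite /=; lra.
rewrite mult_INR; apply: sqr_le_of_lt_mul_sqrt; [exact: pos_INR | exact: pos_INR|].
exact: Rnot_le_lt.
Qed.
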